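(* Let $\lambda>0$, let $\Gamma$ be a bipartite metric graph, and let $f:\Gamma\to\Gamma$ be a graph map that preserves the bipartite structure, does not collapse any edge, and is uniformly $\lambda$-expanding. Then the split map $S(f):S(\Gamma)\to S(\Gamma)$ is uniformly $\lambda$-expanding.
   Context: A graph map sends vertices to vertices and each edge to an edge path (backtracking allowed). A metric graph has positive edge lengths; the length of an edge path is the sum of edge lengths with multiplicity, and $f$ is uniformly $\lambda$-expanding if each edge's image has $\lambda$ times the edge's length. Let $\Gamma$ have vertex parts $V_0,V_1$ and edges $x_1,x_2,\dots$, each oriented from its $V_0$-endpoint to its $V_1$-endpoint; ''preserves the bipartite structure'' means $f(V_0)\subset V_0$, $f(V_1)\subset V_1$, so each $f(x_i)$ is an edge path of odd combinatorial length $\|f(x_i)\|$ (number of edges). Prototype graph and maps: $P_7$ has vertices $v_0,v_1$ and edges $a,\dots,g$ oriented $v_0\to v_1$ (uppercase = reversed); $\phi_1=\mathrm{id}$ and, for $m\ge0$, $\phi_{3+2m}$: $a\mapsto aG(aB)^ma$, $b\mapsto bD(bC)^mb$, $c\mapsto cF(cA)^mc$, $d\mapsto aB(aB)^ma$, $e\mapsto cB(aB)^ma$, $f\mapsto aC(aB)^ma$, $g\mapsto bE(bA)^mb$. The split graph $S(\Gamma)$ is obtained by replacing each edge $x_i$ (from $u\in V_0$ to $w\in V_1$) by seven edges $a_i,\dots,g_i$ from $u$ to $w$, each of the same length as $x_i$. The split map $S(f)$ sends the edge $y_i$ ($y\in\{a,\dots,g\}$) to the edge path obtained from the word $\phi_{\|f(x_i)\|}(y)$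 by giving its $t$-th letter the subscript of the $t$-th edge of the path $f(x_i)$ (keeping the letter and its case). *)

From mathcomp Require Import all_boot all_order all_algebra.
Set Implicit Arguments. Unset Strict Implicit. Unset Printing Implicit Defensive.
Import Order.TTheory GRing.Theory Num.Theory.
Local Open Scope ring_scope.

(* A graph with vertex type V and edge type E; edge e is oriented from
   [src e] to [tgt e].  An oriented edge is a pair (e, b) where b = true means
   e is traversed backwards ("uppercase" letter). *)
Section Graphs.
Variables (V E : Type) (src tgt : E -> V).

Definition ostart (x : E * bool) : V := if x.2 then tgt x.1 else src x.1.
Definition oend (x : E * bool) : V := if x.2 then src x.1 else tgt x.1.

Fixpoint is_path (u w : V) (p : seq (E * bool)) : Prop :=
  match p with
  | [::] => u = w
  | x :: p' => ostart x = u /\ is_path (oend x) w p'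
  end.

(* Bipartite structure: part v = false for v in V_0, true for v in V_1;
   each edge is oriented from its V_0-endpoint to its V_1-endpoint. *)
Definition bipartite (part : V -> bool) : Prop :=
  forall e, part (src e) = false /\ part (tgt e) = true.

Definition graph_map (fV : V -> V) (fE : E -> seq (E * bool)) : Prop :=
  forall e, is_path (fV (src e)) (fV (tgt e)) (fE e).

Definition preserves_bipartite (part : V -> bool) (fV : V -> V) : Prop :=
  forall v, part (fV v) = part v.

Definition no_collapse (fE : E -> seq (E * bool)) : Prop :=
  forall e, fE e <> [::].
End Graphs.

Section Metric.
Variables (R : numDomainType) (E : Type).

Definition metric (len : E -> R) : Prop := forall e, 0 < len e.

Definition plen (len : E -> R) (p : seq (E * bool)) : R :=
  \sum_(x <- p) len x.1.

Definition uniformly_expanding (len : E -> R) (fE : E -> seq (E * bool))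
  (lam : R) : Prop :=
  forall e, plen len (fE e) = lam * len e.
End Metric.

(* The seven letters a..g of the prototype graph P_7. *)
Inductive letter := La | Lb | Lc | Ld | Le | Lf | Lg.

(* Words: (letter, true) is the uppercase (reversed) letter. *)
Definition rep (m : nat) (w : seq (letter * bool)) : seq (letter * bool) :=
  flatten (nseq m w).

Definition lo (l : letter) : letter * bool := (l, false).
Definition up (l : letter) : letter * bool := (l, true).

(* phi_k(y); phi_1 = id, phi_{3+2m} as in the paper; for even k (never used,
   since k is always odd under the hypotheses) we put the empty word. *)
Definition phi (k : nat) (y : letter) : seq (letter * bool) :=
  if k == 1%N then [:: lo y]
  else if odd k && (3 <= k)%N then
    let m := ((k - 3) %/ 2)%N in
    match y with
    | La => [:: lo La; up Lg] ++ rep m [:: lo La; up Lb] ++ [:: lo La]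
    | Lb => [:: lo Lb; up Ld] ++ rep m [:: lo Lb; up Lc] ++ [:: lo Lb]
    | Lc => [:: lo Lc; up Lf] ++ rep m [:: lo Lc; up La] ++ [:: lo Lc]
    | Ld => [:: lo La; up Lb] ++ rep m [:: lo La; up Lb] ++ [:: lo La]
    | Le => [:: lo Lc; up Lb] ++ rep m [:: lo La; up Lb] ++ [:: lo La]
    | Lf => [:: lo La; up Lc] ++ rep m [:: lo La; up Lb] ++ [:: lo La]
    | Lg => [:: lo Lb; up Le] ++ rep m [:: lo Lb; up La] ++ [:: lo Lb]
    end
  else [::].

(* The split graph S(Gamma): edges E * letter, edge (x_i, y) = y_i has the
   same endpoints and length as x_i; vertex partition unchanged. *)
Section Split.
Variables (V E : Type).
Definition split_src (src : E -> V) (ey : E * letter) : V := src ey.1.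
Definition split_tgt (tgt : E -> V) (ey : E * letter) : V := tgt ey.1.
Definition split_len (R : Type) (len : E -> R) (ey : E * letter) : R := len ey.1.

(* The split map S(f) on edges: y_i |-> phi_{||f(x_i)||}(y) where the t-th
   letter gets the subscript of the t-th edge of f(x_i), keeping letter and
   case.  On vertices S(f) agrees with f. *)
Definition split_map (fE : E -> seq (E * bool)) (ey : E * letter)
  : seq ((E * letter) * bool) :=
  [seq ((p.2.1, p.1.1), p.1.2) | p <- zip (phi (size (fE ey.1)) ey.2) (fE ey.1)].
End Split.

From mathcomp Require Import all_boot all_order all_algebra.
From mathcomp Require Import zify.
Set Implicit Arguments. Unset Strict Implicit. Unset Printing Implicit Defensive.
Import Order.TTheory GRing.Theory Num.Theory.
Local Open Scope ring_scope.

(* Since f preserves the bipartition, every f(x_i) has odd combinatorial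
   length k, and phi_k(y) is a word of exactly k letters.  So S(f)(y_i) uses
   the edges of f(x_i) one for one, each relabelled by a letter, and since
   relabelling keeps lengths, |S(f)(y_i)| = |f(x_i)| = lam |x_i| = lam |y_i|. *)

Lemma size_rep (m : nat) (w : seq (letter * bool)) :
  size (rep m w) = (m * size w)%N.
Proof. by rewrite /rep size_flatten /shape map_nseq sumn_nseq mulnC. Qed.

Lemma size_phi (k : nat) (y : letter) : odd k -> size (phi k y) = k.
Proof.
move=> odd_k; rewrite /phi; case: eqP => [-> // | k_neq1].
have k_ge3 : (3 <= k)%N by case: k odd_k k_neq1 => [|[|[|k]]].
have k_mod2 : (k %% 2 = 1)%N by rewrite modn2 odd_k.
rewrite odd_k k_ge3; case: y; rewrite /= !size_cat size_rep /=; lia.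
Qed.

Section Bipartite.
Variables (V E : Type) (src tgt : E -> V) (part : V -> bool).
Hypothesis part_bip : bipartite src tgt part.

Lemma is_path_part (p : seq (E * bool)) (u w : V) :
  is_path src tgt u w p -> part w = part u (+) odd (size p).
Proof.
elim: p u => [|x p IHp] u /= => [-> | [<- /IHp ->]]; first by rewrite addbF.
case: (part_bip x.1) => src0 tgt1; rewrite /ostart /oend.
by case: x.2; rewrite ?src0 ?tgt1; case: odd.
Qed.

Lemma graph_map_odd_size (fV : V -> V) (fE : E -> seq (E * bool)) (e : E) :
  graph_map src tgt fV fE -> preserves_bipartite part fV -> odd (size (fE e)).
Proof.
move=> fgraph fpart; have := is_path_part (fgraph e).
by rewrite !fpart; case: (part_bip e) => -> ->; case: odd.
Qed.

End Bipartite.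

Lemma plen_relabel (R : numDomainType) (E : Type) (len : E -> R)
    (w : seq (letter * bool)) (p : seq (E * bool)) :
  size w = size p ->
  plen (split_len len) [seq ((q.2.1, q.1.1), q.1.2) | q <- zip w p]
    = plen len p.
Proof.
move=> size_wp; rewrite /plen big_map -[in RHS](@unzip2_zip _ _ w p) ?size_wp //.
by rewrite big_map.
Qed.

Theorem mainTheorem5 (R : realFieldType) (V E : finType)
  (part : V -> bool) (src tgt : E -> V) (len : E -> R)
  (fV : V -> V) (fE : E -> seq (E * bool)) (lam : R) :
  0 < lam ->
  bipartite src tgt part ->
  metric len ->
  graph_map src tgt fV fE ->
  preserves_bipartite part fV ->
  no_collapse fE ->
  uniformly_expanding len fE lam ->
  uniformly_expanding (split_len len) (split_map fE) lam.
Proof.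
move=> _ part_bip _ fgraph fpart _ fexp [e y].
have odd_fe := graph_map_odd_size part_bip e fgraph fpart.
by rewrite plen_relabel ?size_phi // fexp.
Qed.
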